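(* In the two-tier residency matching game described in the context, suppose $v\ge \frac{e}{e-1}$ and high-tier doctors submit lists of length $K\ge 1$. Then, under the large market approximation, the social welfare resulting from matches of high-tier doctors with high-tier hospitals in equilibrium is not less than the corresponding social welfare when $K=1$.
   Context: Model: there are $n$ high-tier and $rn$ low-tier doctors ($r>0$), and $n$ high-tier and $rn$ low-tier hospitals, each with one position. Every hospital prefers every high doctor to every low doctor and every doctor prefers every high hospital to every low hospital; within a tier, preferences are independent uniformly random permutations. Each doctor submits a ranked list of hospitals of the allowed length: a strategy $(k,K-k)$ lists his $k$ most preferred high hospitals followed by his $K-k$ most preferred low hospitals. Hospitals submit full true rankings; doctor-proposing deferred acceptance is run. Values: a doctor gets $v>1$ if matched to a high hospital, $1$ if matched to a low one, $0$ if unmatched; a hospital gets $v$ from a high doctor, $1$ from a low doctor, $0$ if unfilled; social welfare is the sum of all agents' values. Large market approximation: $n\to\infty$ with $r,K,v$ fixed; each application is accepted independently with a probability determined by the aggregate strategy profile via fixed-point equations (expected matched doctors = expected hospitals receiving at least one admissible application; a hospital receiving on average $\lambda$ applications gets none with probability $e^{-\lambda}$). Equilibrium means the symmetric Nash equilibrium (all doctors of a tier use the same, possibly mixed, strategy, each maximizing expected value given the acceptance probabilities). *)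

From Stdlib Require Import Reals Lra Lia.
Open Scope R_scope.

(* Large-market approximation of the two-tier matching game, high-tier doctor
   side.  All quantities are normalised per n (n high doctors = n high
   hospitals; r*n low hospitals).

   A (possibly mixed) symmetric strategy of the high doctors is a probability
   vector p over k = 0..K, where k means the pure strategy (k, K-k).

   a = probability that an application of a high doctor to a high hospital is
       accepted; b = probability that an application of a high doctor to a low
       hospital is accepted.  (Hospitals of both tiers prefer every high doctor
       to every low doctor, so only high doctors' applications are admissible
       competitors for high doctors; low doctors do not influence a, b.) *)

Definition is_mixed (K : nat) (p : nat -> R) : Prop :=
  (forall k : nat, (k <= K)%nat -> 0 <= p k) /\ sum_f_R0 p K = 1.

Definition matched_HH (K : nat) (p : nat -> R) (a : R) : R :=
  sum_f_R0 (fun k => p k * (1 - (1 - a) ^ k)) K.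

(* expected number of applications of high doctors to high hospitals, per high
   hospital: a doctor playing (k,K-k) applies to his j-th high hospital iff his
   first j-1 were rejected, i.e. sum_{j<k} (1-a)^j = (1-(1-a)^k)/a times. *)
Definition apps_HH (K : nat) (p : nat -> R) (a : R) : R :=
  sum_f_R0 (fun k => p k * (1 - (1 - a) ^ k) / a) K.

Definition matched_HL (K : nat) (p : nat -> R) (a b : R) : R :=
  sum_f_R0 (fun k => p k * (1 - a) ^ k * (1 - (1 - b) ^ (K - k))) K.

Definition apps_HL (K : nat) (p : nat -> R) (a b : R) : R :=
  sum_f_R0 (fun k => p k * (1 - a) ^ k * (1 - (1 - b) ^ (K - k)) / b) K.

Definition payoff (v : R) (K : nat) (a b : R) (k : nat) : R :=
  v * (1 - (1 - a) ^ k) + (1 - a) ^ k * (1 - (1 - b) ^ (K - k)).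

(* Convention: if a tier of hospitals receives no applications at all, the
   acceptance probability is 1 (limit lambda -> 0 of (1-e^{-lambda})/lambda). *)
Definition high_equilibrium (v r : R) (K : nat) (p : nat -> R) (a b : R) : Prop :=
  is_mixed K p /\
  0 < a <= 1 /\ 0 < b <= 1 /\
  matched_HH K p a = 1 - exp (- apps_HH K p a) /\
  (apps_HH K p a = 0 -> a = 1) /\
  matched_HL K p a b / r = 1 - exp (- (apps_HL K p a b / r)) /\
  (apps_HL K p a b = 0 -> b = 1) /\
  (forall k : nat, (k <= K)%nat -> 0 < p k ->
     forall j : nat, (j <= K)%nat -> payoff v K a b j <= payoff v K a b k).

(* social welfare (per n) from matches of high doctors with high hospitals:
   each such match gives v to the doctor and v to the hospital. *)
Definition hh_welfare (v : R) (K : nat) (p : nat -> R) (a : R) : R :=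
  2 * v * matched_HH K p a.

(* With K = 1 a high doctor applies to at most one high hospital, so the mean
   number lambda of applications per high hospital is at most 1.  With K >= 1
   in equilibrium lambda >= 1: otherwise some doctors play (0, K), and the
   fixed point lambda a = 1 - exp (-lambda) with lambda < 1 forces, by
   convexity of exp, a > 1 - 1/e, so that v a > 1 whenever v >= e/(e-1);
   playing (1, K-1) would then strictly beat (0, K).  The high-high welfare
   2 v (1 - exp (-lambda)) is increasing in lambda. *)

From Stdlib Require Import Reals Lra Lia.
Open Scope R_scope.

Lemma pow_le_1 (x : R) (n : nat) : 0 <= x <= 1 -> x ^ n <= 1.
Proof. intros Hx. rewrite <- (pow1 n). apply pow_incr. lra. Qed.

Lemma attempts_nonneg (a : R) (k : nat) : 0 < a <= 1 ->
  0 <= (1 - (1 - a) ^ k) / a.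
Proof.
  intros Ha. pose proof (pow_le_1 (1 - a) k ltac:(lra)).
  apply Rle_mult_inv_pos; lra.
Qed.

Lemma one_le_attempts (a : R) (k : nat) : 0 < a <= 1 -> (1 <= k)%nat ->
  1 <= (1 - (1 - a) ^ k) / a.
Proof.
  intros Ha Hk. destruct k as [|k]; [lia|].
  assert (Hpow : (1 - a) ^ S k <= 1 - a).
  { simpl. pose proof (pow_le_1 (1 - a) k ltac:(lra)).
    pose proof (pow_le (1 - a) k ltac:(lra)). nra. }
  apply (Rmult_le_reg_r a); [lra|].
  unfold Rdiv. rewrite Rmult_assoc, Rinv_l; lra.
Qed.

Lemma apps_HH_term (p : nat -> R) (a : R) (k : nat) :
  p k * (1 - (1 - a) ^ k) / a = p k * ((1 - (1 - a) ^ k) / a).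
Proof. unfold Rdiv. ring. Qed.

Lemma apps_HH_nonneg (K : nat) (p : nat -> R) (a : R) : 0 < a <= 1 ->
  (forall k, (k <= K)%nat -> 0 <= p k) -> 0 <= apps_HH K p a.
Proof.
  intros Ha Hp. unfold apps_HH.
  rewrite <- (Rmult_0_l (INR (S K))), <- sum_cte.
  apply sum_Rle. intros k Hk. rewrite apps_HH_term.
  apply Rmult_le_pos; [apply Hp, Hk | apply attempts_nonneg, Ha].
Qed.

Lemma apps_HH_ge_mass (K : nat) (p : nat -> R) (a : R) : 0 < a <= 1 ->
  (forall k, (k <= K)%nat -> 0 <= p k) -> sum_f_R0 p K - p 0%nat <= apps_HH K p a.
Proof.
  intros Ha. unfold apps_HH. induction K as [|K IH]; intros Hp.
  - simpl. replace (p 0%nat * (1 - 1) / a) with 0 by (field; lra). lra.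
  - rewrite !tech5, apps_HH_term.
    assert (Hk : p (S K) * 1 <= p (S K) * ((1 - (1 - a) ^ S K) / a)).
    { apply Rmult_le_compat_l; [apply Hp; lia | apply one_le_attempts; [exact Ha | lia]]. }
    assert (IH' := IH (fun k Hk => Hp k (Nat.le_le_succ_r _ _ Hk))).
    lra.
Qed.

Lemma matched_HH_eq_apps_mul (K : nat) (p : nat -> R) (a : R) : a <> 0 ->
  matched_HH K p a = apps_HH K p a * a.
Proof.
  intros Ha. unfold apps_HH, matched_HH. induction K as [|K IH]; simpl.
  - field. exact Ha.
  - rewrite Rmult_plus_distr_r, IH. f_equal. field. exact Ha.
Qed.

Lemma exp_opp_lt_chord (l : R) : 0 < l < 1 -> exp (- l) < (1 - l) + l * exp (-1).
Proof.
  intros Hl.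
  (* exp (-l) = (1 - l) * (exp (-l) * (1 + l)) + l * (exp (-l) * l), and the
     two brackets are bounded by 1 + l < exp l and l <= exp (l - 1). *)
  assert (Hshift : forall x, exp (- l) * exp x = exp (x - l)).
  { intros x. rewrite <- exp_plus. f_equal. ring. }
  assert (H1 : exp (- l) * (1 + l) < 1).
  { replace 1 with (exp (- l) * exp l) at 2 by (rewrite Hshift, Rminus_diag; apply exp_0).
    apply Rmult_lt_compat_l; [apply exp_pos | apply exp_ineq1; lra]. }
  assert (H2 : exp (- l) * l <= exp (-1)).
  { replace (-1) with (l - 1 - l) by ring. rewrite <- Hshift.
    apply Rmult_le_compat_l; [left; apply exp_pos|].
    pose proof (exp_ineq1_le (l - 1)). lra. }
  assert (B1 : (1 - l) * (exp (- l) * (1 + l)) < (1 - l) * 1)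
    by (apply Rmult_lt_compat_l; lra).
  assert (B2 : l * (exp (- l) * l) <= l * exp (-1))
    by (apply Rmult_le_compat_l; lra).
  replace (exp (- l)) with ((1 - l) * (exp (- l) * (1 + l)) + l * (exp (- l) * l))
    by ring.
  lra.
Qed.

Lemma fixpoint_acceptance_gt (l a : R) : 0 < l < 1 ->
  l * a = 1 - exp (- l) -> 1 - exp (-1) < a.
Proof.
  intros Hl Hfix. pose proof (exp_opp_lt_chord l Hl).
  apply (Rmult_lt_reg_l l); lra.
Qed.

Lemma threshold_mul_gt_1 (v a : R) : exp 1 / (exp 1 - 1) <= v ->
  1 - exp (-1) < a -> 1 < v * a.
Proof.
  intros Hv Ha.
  assert (He : 1 < exp 1) by (pose proof (exp_ineq1 1 ltac:(lra)); lra).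
  assert (Hthr : exp 1 / (exp 1 - 1) = / (1 - exp (-1))).
  { replace (-1) with (- (1)) by ring. rewrite exp_Ropp. field. lra. }
  assert (Hq : 0 < 1 - exp (-1)).
  { rewrite <- exp_0 at 1. pose proof (exp_increasing (-1) 0 ltac:(lra)). lra. }
  rewrite Hthr in Hv.
  assert (Hva : / (1 - exp (-1)) * a <= v * a)
    by (apply Rmult_le_compat_r; lra).
  assert (1 < / (1 - exp (-1)) * a); [|lra].
  apply (Rmult_lt_reg_l (1 - exp (-1))); [exact Hq|].
  rewrite <- Rmult_assoc, Rinv_r; lra.
Qed.

Lemma payoff_0_lt_payoff_1 (v : R) (K : nat) (a b : R) :
  0 < a <= 1 -> 0 < b <= 1 -> (1 <= K)%nat -> 1 < v * a ->
  payoff v K a b 0 < payoff v K a b 1.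
Proof.
  intros Ha Hb HK Hva. unfold payoff.
  rewrite !pow_1, !pow_O, Nat.sub_0_r.
  pose proof (pow_le_1 (1 - b) (K - 1) ltac:(lra)).
  pose proof (pow_le (1 - b) K ltac:(lra)).
  assert (0 <= (1 - a) * (1 - (1 - b) ^ (K - 1))) by (apply Rmult_le_pos; lra).
  lra.
Qed.

Lemma equilibrium_apps_HH_ge_1 (v r : R) (K : nat) (p : nat -> R) (a b : R) :
  exp 1 / (exp 1 - 1) <= v -> (1 <= K)%nat ->
  high_equilibrium v r K p a b -> 1 <= apps_HH K p a.
Proof.
  intros Hv HK [[Hp Hsum] [Ha [Hb [Hfix [Hzero [_ [_ Hbest]]]]]]].
  destruct (Rle_or_lt 1 (apps_HH K p a)) as [Hge|Hlt]; [exact Hge|exfalso].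
  pose proof (apps_HH_nonneg K p a Ha Hp) as Hnn.
  pose proof (apps_HH_ge_mass K p a Ha Hp) as Hmass.
  assert (Hva : 1 < v * a).
  { apply threshold_mul_gt_1; [exact Hv|].
    destruct Hnn as [Hpos|Hnull].
    - apply (fixpoint_acceptance_gt (apps_HH K p a)); [lra|].
      rewrite <- matched_HH_eq_apps_mul by lra. exact Hfix.
    - rewrite (Hzero (eq_sym Hnull)). pose proof (exp_pos (-1)). lra. }
  assert (Hp0 : 0 < p 0%nat) by lra.
  pose proof (Hbest 0%nat ltac:(lia) Hp0 1%nat HK).
  pose proof (payoff_0_lt_payoff_1 v K a b Ha Hb HK Hva).
  lra.
Qed.

Lemma apps_HH_1_le_1 (p : nat -> R) (a : R) : a <> 0 ->
  is_mixed 1 p -> apps_HH 1 p a <= 1.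
Proof.
  intros Ha [Hp Hsum]. simpl in Hsum.
  assert (Happs : apps_HH 1 p a = p 1%nat) by (unfold apps_HH; simpl; field; exact Ha).
  pose proof (Hp 0%nat ltac:(lia)). lra.
Qed.

Lemma one_sub_exp_opp_le (x y : R) : x <= y -> 1 - exp (- x) <= 1 - exp (- y).
Proof.
  intros [Hlt|Heq]; [|subst; lra].
  pose proof (exp_increasing (- y) (- x) ltac:(lra)). lra.
Qed.

Theorem lemma3 (v r : R) (K : nat) (pK p1 : nat -> R) (aK bK a1 b1 : R) :
  exp 1 / (exp 1 - 1) <= v -> 0 < r -> (1 <= K)%nat ->
  high_equilibrium v r K pK aK bK ->
  high_equilibrium v r 1 p1 a1 b1 ->
  hh_welfare v 1 p1 a1 <= hh_welfare v K pK aK.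
Proof.
  intros Hv _ HK HeqK Heq1.
  pose proof (equilibrium_apps_HH_ge_1 v r K pK aK bK Hv HK HeqK) as HappsK.
  destruct HeqK as [_ [_ [_ [HfixK _]]]].
  destruct Heq1 as [Hmixed1 [Ha1 [_ [Hfix1 _]]]].
  pose proof (apps_HH_1_le_1 p1 a1 ltac:(lra) Hmixed1) as Happs1.
  assert (Hv1 : 1 < v * 1).
  { apply threshold_mul_gt_1; [exact Hv|]. pose proof (exp_pos (-1)). lra. }
  unfold hh_welfare. rewrite HfixK, Hfix1.
  apply Rmult_le_compat_l; [lra|].
  apply one_sub_exp_opp_le. lra.
Qed.
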